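(* Let $C_{\vec B}$ be a Cantor set with scale factor $N$ and digit set $D$. Let $D_1,\dots,D_k$ be all the $2$-element subsets of $\{0,1,\dots,N-1\}$, and let $\vec B_1,\dots,\vec B_k$ be the associated binary digit vectors of length $N$. Then for any choice of irrational numbers $x_i\in C_{\vec B_i}$, $i=1,\dots,k$, we have $$D=\bigcup_{i\in A}D_i,\qquad\text{where } A=\{i : F_{\vec B}(x_i)\notin\mathbb Q\}.$$ In particular $D$ is uniquely determined by $\{(x_i,F_{\vec B}(x_i))\}_{i=1}^k$.
   Context: A Cantor set is specified by an integer scale factor $N\ge3$ and a digit set $D\subset\{0,\dots,N-1\}$ with $2\le|D|\le N-1$; equivalently by the binary digit vector $\vec B=(b_0,\dots,b_{N-1})$ with $b_i=1$ iff $i\in D$, $\|\vec B\|=|D|$. With $\phi_d(x)=(x+d)/N$ for $d\in D$, $C_{\vec B}\subset[0,1]$ is the unique nonempty compact set with $C_{\vec B}=\bigcup_{d\in D}\phi_d(C_{\vec B})$, and $\mu_{\vec B}$ is the unique Borel probability measure with $\mu_{\vec B}=\frac{1}{\|\vec B\|}\sum_{d\in D}\mu_{\vec B}\circ\phi_d^{-1}$. The CDF is $F_{\vec B}(x)=\mu_{\vec B}([0,x])$, $x\in[0,1]$. *)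

From HB Require Import structures.
From mathcomp Require Import all_boot all_order all_algebra.
From mathcomp Require Import all_classical all_reals all_analysis.
Unset Printing Implicit Defensive.
Import Order.TTheory GRing.Theory Num.Theory.
Import numFieldNormedType.Exports.
Local Open Scope classical_set_scope.
Local Open Scope ring_scope.

Definition cphi {R : realType} (N : nat) (d : nat) (x : R) : R :=
  (x + d%:R) / N%:R.

Definition ifs_invariant {R : realType} (N : nat) (D : {set 'I_N}) (K : set R) :=
  compact K /\ K !=set0 /\
  K = \bigcup_(d in [set d : 'I_N | d \in D]) (cphi N d @` K).

(* C_B : the unique nonempty compact set with C = U_{d in D} phi_d(C),
   described as the intersection of all such sets (there is exactly one). *)
Definition cantor_set {R : realType} (N : nat) (D : {set 'I_N}) : set R :=
  [set x | forall K : set R, ifs_invariant N D K -> K x].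

Definition self_similar {R : realType} (N : nat) (D : {set 'I_N})
  (mu : probability R R) :=
  mu (~` `[0, 1]%classic) = 0%E /\
  forall A : set R, measurable A ->
    mu A = (((#|D|%:R)^-1 : R)%:E *
           \sum_(d in D) mu (cphi N d @^-1` A))%E.

From HB Require Import structures.
From mathcomp Require Import all_boot all_order all_algebra.
From mathcomp Require Import all_classical all_reals all_analysis.
From mathcomp Require Import ring lra.
Import Order.TTheory GRing.Theory Num.Theory.
Import numFieldNormedType.Exports.
Local Open Scope classical_set_scope.
Local Open Scope ring_scope.

(** Let [x] be an irrational point of the Cantor set with digit
pair [P].  Expanding [x] in base [N] with digits [e_k] in [P], its tails
[x_k] stay in (0, 1), and self-similarity of [mu] gives
[|D| F(x_k) = #{d in D | d < e_k} + [e_k in D] F(x_(k+1))].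
If some [e_k] is not in [D], the recursion stops at a rational value and
back-substitution makes [F(x)] rational.  If all [e_k] lie in [D] and
[F(x) = m / n], the integers [n F(x_k)] in [[0, n]] repeat, which forces the
digits, hence [x], to be eventually periodic, so [x] would be rational.  When
[P] is not contained in [D], all digits in [D] means a single repeated digit,
again impossible.  So [F(x)] is irrational exactly when [P \subset D], and
[D] is the union of the pairs it contains. *)

Section Rational.
Context {R : realType}.
Implicit Types a b : R.

Lemma rational_ratr (q : rat) : rational (ratr q : R).
Proof. by exists q. Qed.

Lemma rational_nat n : rational (n%:R : R).
Proof. by rewrite -ratr_nat; exact: rational_ratr. Qed.

Lemma rationalD a b : rational a -> rational b -> rational (a + b).
Proof. by move=> [p _ <-] [q _ <-]; rewrite -rmorphD; exact: rational_ratr. Qed.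

Lemma rationalN a : rational a -> rational (- a).
Proof. by move=> [p _ <-]; rewrite -rmorphN; exact: rational_ratr. Qed.

Lemma rationalM a b : rational a -> rational b -> rational (a * b).
Proof. by move=> [p _ <-] [q _ <-]; rewrite -rmorphM; exact: rational_ratr. Qed.

Lemma rationalV a : rational a -> rational a^-1.
Proof. by move=> [p _ <-]; rewrite -fmorphV; exact: rational_ratr. Qed.

Lemma irrational_lt01 a : irrational a -> 0 <= a <= 1 -> 0 < a < 1.
Proof.
move=> a_irr /andP[a0 a1]; rewrite !lt_neqAle a0 a1 !andbT.
apply/andP; split; apply/eqP => e; apply: a_irr.
  by rewrite -e; exact: (rational_nat 0).
by rewrite e; exact: (rational_nat 1).
Qed.

End Rational.

Definition eventually_periodic {T : Type} (s : nat -> T) :=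
  exists i j, (i < j)%N /\ forall l, s (i + l)%N = s (j + l)%N.

Lemma nat_seq_repeats {f : nat -> nat} {m : nat} :
  (forall k, f k < m)%N -> exists i j, (i < j)%N /\ f i = f j.
Proof.
move=> f_lt; pose g (i : 'I_m.+1) : 'I_m := Ordinal (f_lt i).
have /injectivePn [i [j ij gij]] : ~~ injectiveb g.
  by apply/injectiveP => /leq_card; rewrite !card_ord ltnn.
have fij : f i = f j by have := congr1 val gij.
case: (ltngtP i j) => [lt_ij|lt_ji|/val_inj eq_ij]; first by exists i, j.
  by exists j, i.
by rewrite eq_ij eqxx in ij.
Qed.

Lemma eventually_periodic_inj {T U : eqType} {A : {pred T}} {f : T -> U}
    {s : nat -> T} :
  {in A &, injective f} -> (forall k, s k \in A) ->
  eventually_periodic (f \o s) -> eventually_periodic s.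
Proof.
by move=> f_inj sA [i [j [ij e]]]; exists i, j; split=> // l; apply: f_inj => //; exact: e.
Qed.

Lemma expr_mul_bounded_eq0 {R : realType} {N : nat} {d : R} : (1 < N)%N ->
  (forall j, `|N%:R ^+ j * d| <= 1) -> d = 0.
Proof.
move=> N_gt1 bounded; apply/eqP; apply: contraT => d_neq0.
have d_gt0 : 0 < `|d| by rewrite normr_gt0.
pose j := Num.bound `|d|^-1.
have inv_lt : `|d|^-1 < j%:R by apply: archi_boundP; rewrite invr_ge0 ltW.
have pow_ge : j%:R <= N%:R ^+ j :> R by rewrite -natrX ler_nat ltnW // ltn_expl.
have gt1 : 1 < N%:R ^+ j * `|d|.
  by rewrite -ltr_pdivrMr // div1r (lt_le_trans inv_lt).
have := bounded j; rewrite normrM normrX ger0_norm ?ler0n //.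
by rewrite leNgt gt1.
Qed.

Lemma natr_add_frac_inj {R : realType} {m n : nat} {s t : R} :
  0 <= s < 1 -> 0 <= t < 1 -> m%:R + s = n%:R + t -> m = n.
Proof.
move=> /andP[s0 s1] /andP[t0 t1] e.
case: (ltngtP m n) => // [lt_mn|lt_nm]; exfalso.
  have : m%:R + 1 <= n%:R :> R by rewrite natr1 ler_nat.
  lra.
have : n%:R + 1 <= m%:R :> R by rewrite natr1 ler_nat.
lra.
Qed.

(* The recursion of [cdf_self_similar] along the digits of a point: [c] is
   [#|D|], [a k] counts the elements of [D] below the k-th digit, [b k] says
   whether that digit lies in [D], and [u k] is the CDF at the k-th tail. *)
Section DigitRecursion.
Context {R : realType} {c : nat} {a : nat -> nat} {b : nat -> bool} {u : nat -> R}.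
Hypothesis c_gt0 : (0 < c)%N.
Hypothesis u_rec : forall k, c%:R * u k = (a k)%:R + (b k)%:R * u k.+1.

Let c_neq0 : c%:R != 0 :> R.
Proof. by rewrite pnatr_eq0 -lt0n. Qed.

Lemma rational_rec_pred k : rational (u k.+1) -> rational (u k).
Proof.
move=> rat_next; have -> : u k = ((a k)%:R + (b k)%:R * u k.+1) / c%:R.
  by rewrite -u_rec mulrC mulKf.
apply: rationalM; last exact/rationalV/rational_nat.
by apply: rationalD; [|apply: rationalM] => //; exact: rational_nat.
Qed.

Lemma rational_head k : rational (u k) -> rational (u 0).
Proof. by elim: k => // k IH /rational_rec_pred. Qed.

Lemma rational_of_rec_stop k : ~~ b k -> rational (u 0).
Proof.
move=> bk; apply: (@rational_head k).
have e := u_rec k; rewrite (negbTE bk) mul0r addr0 in e.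
have -> : u k = (a k)%:R / c%:R by rewrite -e mulrC mulKf.
by apply: rationalM; [|apply: rationalV]; exact: rational_nat.
Qed.

Hypothesis b_all : forall k, b k.
Hypothesis a_lt : forall k, (a k < c)%N.
Hypothesis u01 : forall k, 0 <= u k <= 1.

Let u_recT k : c%:R * u k = (a k)%:R + u k.+1.
Proof. by rewrite u_rec b_all mul1r. Qed.

(* 0 and 1 are absorbing: [u k = 0] forces [a k = 0] and [u k.+1 = 0],
   while [u k = 1] forces [a k = c - 1] and [u k.+1 = 1]. *)
Lemma eventually_periodic_of_boundary k :
  u k = 0 \/ u k = 1 -> eventually_periodic a.
Proof.
move=> uk01.
have u_const l : u (k + l) = u k.
  elim: l => [|l IH]; first by rewrite addn0.
  have rec := u_recT (k + l); rewrite IH in rec; rewrite addnS.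
  have /andP[? ?] := u01 (k + l).+1; have := ler0n R (a (k + l)).
  have : (a (k + l))%:R + 1 <= c%:R :> R by rewrite natr1 ler_nat.
  by case: uk01 => e; rewrite e in rec *; lra.
exists k, k.+1; split => // l; apply/eqP; rewrite -(eqr_nat R); apply/eqP.
have e1 := u_recT (k + l); have e2 := u_recT (k + l.+1).
rewrite -addnS !u_const in e1; rewrite -addnS !u_const in e2.
rewrite addSnnS; lra.
Qed.

Section Interior.
Hypothesis u_int : forall k, 0 < u k < 1.

Let u_frac k : 0 <= u k < 1.
Proof. by have /andP[/ltW -> ->] := u_int k. Qed.

Lemma eq_digits_of_eq i j : u i = u j -> forall l, a (i + l) = a (j + l).
Proof.
move=> uij.
have step l : u (i + l) = u (j + l) ->
    a (i + l) = a (j + l) /\ u (i + l).+1 = u (j + l).+1.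
  move=> eq_l; have e := u_recT (i + l); rewrite eq_l u_recT in e.
  have a_eq := natr_add_frac_inj (u_frac _) (u_frac _) e.
  split; first exact/esym.
  by rewrite a_eq in e; exact/esym/(addrI _ e).
have u_eq l : u (i + l) = u (j + l).
  by elim: l => [|l IH]; [rewrite !addn0 | rewrite !addnS; exact: (step l IH).2].
by move=> l; exact: (step l (u_eq l)).1.
Qed.

Lemma rational_repeats : rational (u 0) -> exists i j, (i < j)%N /\ u i = u j.
Proof.
(* with [u 0 = m / n], every [n * u k] is an integer in (0, n) *)
move=> /rationalP [m [n u0E]].
have n_neq0 : n%:R != 0 :> R.
  by apply/eqP => n0; have := u_int 0%N; rewrite u0E n0 invr0 mulr0 ltxx.
have nu_int k : n%:R * u k \is a Num.int.
  elim: k => [|k IH]; first by rewrite u0E mulrC divfK // intr_int.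
  have -> : n%:R * u k.+1 = c%:R * (n%:R * u k) - (n * a k)%:R.
    by rewrite mulrCA u_recT natrM; ring.
  apply: rpredB; [apply: rpredM|]; rewrite // ?natr_int //.
pose f k := Num.truncn (n%:R * u k).
have fE k : (f k)%:R = n%:R * u k.
  have /andP[u0 _] := u_int k.
  by rewrite truncnK // natrEint nu_int mulr_ge0 ?ler0n ?ltW.
have f_lt k : (f k < n)%N.
  have /andP[_ u1] := u_int k.
  by rewrite -(ltr_nat R) fE -[X in _ < X]mulr1 ltr_pM2l // lt0r n_neq0 ler0n.
have [i [j [ij fij]]] := nat_seq_repeats f_lt.
by exists i, j; split => //; apply: (mulfI n_neq0); rewrite -!fE fij.
Qed.

End Interior.

Lemma eventually_periodic_of_rational : rational (u 0) -> eventually_periodic a.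
Proof.
move=> u0_rat.
case: (pselect (exists k, u k = 0 \/ u k = 1)) => [[k]|no_bd].
  exact: eventually_periodic_of_boundary.
have u_int k : 0 < u k < 1.
  have /andP[u0 u1] := u01 k; rewrite !lt_neqAle u0 u1 !andbT.
  by apply/andP; split; apply/eqP => e; apply: no_bd; exists k; [left|right].
have [i [j [ij uij]]] := rational_repeats u_int u0_rat.
by exists i, j; split => //; exact: eq_digits_of_eq u_int _ _ uij.
Qed.

End DigitRecursion.

Section Shift.
Context {R : realType} {N : nat}.
Hypothesis N_gt1 : (1 < N)%N.

Let N_gt0 : 0 < N%:R :> R.
Proof. by rewrite ltr0n ltnW. Qed.

Definition shift (d : 'I_N) (y : R) : R := N%:R * y - (d : nat)%:R.

Lemma cphiK (d : 'I_N) : cancel (cphi N d) (shift d).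
Proof. by move=> z; rewrite /shift /cphi mulrC divfK ?addrK ?gt_eqF. Qed.

Lemma shiftK (d : 'I_N) : cancel (shift d) (cphi N d).
Proof. by move=> y; rewrite /shift /cphi subrK mulrC mulKf ?gt_eqF. Qed.

Lemma cphi01 (d : 'I_N) (z : R) : 0 <= z <= 1 -> 0 <= cphi N d z <= 1.
Proof.
move=> /andP[z0 z1]; have : (d : nat)%:R + 1 <= N%:R :> R by rewrite natr1 ler_nat.
rewrite /cphi divr_ge0 ?addr_ge0 ?ler0n ?(ltW N_gt0) //= ler_pdivrMr // mul1r; lra.
Qed.

Lemma cphi_preimage_itv (d : 'I_N) (y : R) :
  cphi N d @^-1` `[0, y]%classic = `[- (d : nat)%:R, shift d y]%classic.
Proof.
apply/seteqP; split=> z /=; rewrite !in_itv /= /cphi /shift.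
  by rewrite ler_pdivrMr // ler_pdivlMr // mul0r => /andP[? ?]; apply/andP; split; lra.
by rewrite ler_pdivrMr // ler_pdivlMr // mul0r => /andP[? ?]; apply/andP; split; lra.
Qed.

Lemma shift_continuous (d : 'I_N) : continuous (shift d : R -> R).
Proof. by move=> y; apply: cvgB; [apply: cvgMl_tmp; exact: cvg_id | exact: cvg_cst]. Qed.

Fixpoint tail (es : nat -> 'I_N) (x : R) (k : nat) : R :=
  if k is k'.+1 then shift (es k') (tail es x k') else x.

Lemma tail_affine es x k : exists2 r, rational r & tail es x k = N%:R ^+ k * x - r.
Proof.
elim: k => [|k [r rr e]] /=.
  by exists 0; rewrite ?expr0 ?mul1r ?subr0 //; exact: (rational_nat 0).
exists (N%:R * r + (es k : nat)%:R); last by rewrite /shift e exprS; ring.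
by apply: rationalD; [apply: rationalM => //|]; exact: rational_nat.
Qed.

Lemma irrational_tail es x k : irrational x -> irrational (tail es x k).
Proof.
move=> x_irr tail_rat; apply: x_irr; have [r rr e] := tail_affine es x k.
have -> : x = (tail es x k + r) / N%:R ^+ k.
  by rewrite e subrK mulrC mulKf // expf_neq0 // gt_eqF.
by apply: rationalM; [exact: rationalD | apply/rationalV; rewrite -natrX; exact: rational_nat].
Qed.

(* Along a period the gap between the tails at [i + l] and [j + l] is
   multiplied by [N], yet stays in [[-1, 1]]; so the tails at [i] and [j]
   agree, a linear equation for [x] with rational coefficients. *)
Lemma rational_of_eventually_periodic es x :
  (forall k, 0 <= tail es x k <= 1) -> eventually_periodic es -> rational x.
Proof.
move=> tail01 [i [j [ij es_per]]].
pose gap l := tail es x (i + l) - tail es x (j + l).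
have gapE l : gap l = N%:R ^+ l * gap 0%N.
  elim: l => [|l IH]; first by rewrite mul1r.
  transitivity (N%:R * gap l); first by rewrite /gap !addnS /= /shift es_per; ring.
  by rewrite IH exprS mulrA.
have gap0 : gap 0%N = 0.
  apply: (expr_mul_bounded_eq0 N_gt1) => l; rewrite -gapE ler_norml /gap.
  have /andP[? ?] := tail01 (i + l)%N; have /andP[? ?] := tail01 (j + l)%N; lra.
have [ri ri_rat ei] := tail_affine es x i; have [rj rj_rat ej] := tail_affine es x j.
have pow_neq : N%:R ^+ i - N%:R ^+ j != 0 :> R.
  by rewrite subr_eq0 -!natrX eqr_nat neq_ltn ltn_exp2l // ij.
have -> : x = (ri - rj) / (N%:R ^+ i - N%:R ^+ j).
  apply: (mulIf pow_neq); rewrite divfK //.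
  move/eqP: gap0; rewrite /gap !addn0 ei ej subr_eq0 => /eqP tail_eq.
  have -> : ri = N%:R ^+ i * x - (N%:R ^+ j * x - rj) by rewrite -tail_eq; ring.
  ring.
apply: rationalM; first by apply: rationalD => //; exact: rationalN.
by apply/rationalV/rationalD; [|apply: rationalN]; rewrite -natrX; exact: rational_nat.
Qed.

End Shift.

Section CantorLimit.
Context {R : realType} {N : nat} (Di : {set 'I_N}).
Hypothesis N_gt1 : (1 < N)%N.

Fixpoint cantor_level (n : nat) : set R :=
  if n is n'.+1 then
    `[0, 1]%classic `&`
      \bigcup_(d in [set d : 'I_N | d \in Di]) (shift d @^-1` cantor_level n')
  else `[0, 1]%classic.

Lemma cantor_levelS n y : cantor_level n.+1 y <->
  0 <= y <= 1 /\ exists2 d, d \in Di & cantor_level n (shift d y).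
Proof.
by rewrite /= in_itv /=; split=> -[y01 [d dDi lvl]]; split=> //; exists d.
Qed.

Lemma cantor_level01 {n : nat} {y : R} : cantor_level n y -> 0 <= y <= 1.
Proof. by case: n => [|n]; [rewrite /= in_itv | case/cantor_levelS]. Qed.

Lemma cantor_level_decr m n : (m <= n)%N -> cantor_level n `<=` cantor_level m.
Proof.
have levelS k : cantor_level k.+1 `<=` cantor_level k.
  elim: k => [|k IH] y; first by move/cantor_level01; rewrite /= in_itv.
  case/cantor_levelS => y01 [d dDi lvl]; apply/cantor_levelS; split=> //.
  by exists d => //; exact: IH.
move=> /subnK <-; elim: (n - m)%N => [|k IH] y //.
by rewrite addSn => /levelS /IH.
Qed.

Lemma cantor_level_closed n : closed (cantor_level n).
Proof.
elim: n => [|n IH] /=; first exact: interval_closed.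
apply: closedI; first exact: interval_closed.
apply: closed_bigcup => [|d _]; first exact: finite_finset.
by apply: preimage_closed => // y _; exact: shift_continuous.
Qed.

(* A compact invariant set given explicitly; [cantor_set], the intersection
   of all such sets, lies inside it. *)
Definition cantor_limit : set R := [set y | forall n, cantor_level n y].

Lemma cantor_limit_step y :
  cantor_limit y -> exists2 d, d \in Di & cantor_limit (shift d y).
Proof.
move=> lim_y; apply: contrapT => no_d.
have /choice [f f_fails] :
    forall d : 'I_N, exists n, d \in Di -> ~ cantor_level n (shift d y).
  move=> d; case: (boolP (d \in Di)) => dDi; last by exists 0%N.
  have /existsNP [n ?] : ~ cantor_limit (shift d y) by move=> lim; apply: no_d; exists d.
  by exists n.
have /cantor_levelS [_ [d dDi lvl]] := lim_y (\max_(d in Di) f d).+1.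
apply: (f_fails d dDi); apply: cantor_level_decr lvl.
exact: leq_bigmax_cond.
Qed.

Lemma cantor_limit_compact : compact cantor_limit.
Proof.
apply: (subclosed_compact _ (@segment_compact R 0 1)) => [|y /(_ 0%N) //].
have -> : cantor_limit = \bigcap_(n in [set: nat]) cantor_level n.
  by apply/seteqP; split=> y /= lim_y n //; exact: lim_y.
by apply: closed_bigI => n _; exact: cantor_level_closed.
Qed.

Lemma cantor_limit_invariant :
  cantor_limit = \bigcup_(d in [set d : 'I_N | d \in Di]) (cphi N d @` cantor_limit).
Proof.
apply/seteqP; split=> y.
  move=> /cantor_limit_step [d dDi lim_d].
  by exists d => //; exists (shift d y); rewrite ?shiftK.
move=> [d /= dDi [z lim_z <-]] n.
have y01 := cphi01 N_gt1 d _ (cantor_level01 (lim_z 0%N)).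
case: n => [|n]; first by rewrite /= in_itv.
by apply/cantor_levelS; split=> //; exists d; rewrite ?cphiK.
Qed.

Lemma cantor_limit_neq0 d : d \in Di -> cantor_limit !=set0.
Proof.
move=> dDi; have N1_gt0 : 0 < N%:R - 1 :> R by rewrite subr_gt0 ltr1n.
have d_lt : (d : nat)%:R + 1 <= N%:R :> R by rewrite natr1 ler_nat.
pose p := (d : nat)%:R / (N%:R - 1) : R.
have p_fixed : shift d p = p by rewrite /shift /p; field; lra.
have p01 : 0 <= p <= 1.
  by rewrite divr_ge0 ?ler0n ?(ltW N1_gt0) //= ler_pdivrMr // mul1r; lra.
exists p; elim=> [|n IH]; first by rewrite /= in_itv.
by apply/cantor_levelS; split=> //; exists d; rewrite ?p_fixed.
Qed.

Lemma cantor_set_sub_limit : (0 < #|Di|)%N -> cantor_set N Di `<=` cantor_limit.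
Proof.
case/card_gt0P => d dDi y; apply; split; first exact: cantor_limit_compact.
by split; [exact: cantor_limit_neq0 dDi | exact: cantor_limit_invariant].
Qed.

Lemma cantor_limit_digits (x : R) : cantor_limit x ->
  exists es : nat -> 'I_N, forall k, es k \in Di /\ cantor_limit (tail es x k).
Proof.
move=> lim_x; have [d0 _ _] := cantor_limit_step _ lim_x.
have /choice [g g_step] : forall y, exists d,
    cantor_limit y -> d \in Di /\ cantor_limit (shift d y).
  move=> y; case: (pselect (cantor_limit y)) => [/cantor_limit_step [d ? ?]|].
    by exists d.
  by exists d0.
pose orbit k := iter k (fun y => shift (g y) y) x.
have lim_orbit k : cantor_limit (orbit k) by elim: k => //= k /g_step [].
have tailE k : tail (g \o orbit) x k = orbit k by elim: k => //= k ->.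
by exists (g \o orbit) => k; rewrite tailE; split; [exact: (g_step _ (lim_orbit k)).1|].
Qed.

Lemma cantor_set_digits (x : R) : (0 < #|Di|)%N -> cantor_set N Di x ->
  exists es : nat -> 'I_N, forall k, es k \in Di /\ 0 <= tail es x k <= 1.
Proof.
move=> Di_neq0 /(cantor_set_sub_limit Di_neq0) /cantor_limit_digits [es digits].
by exists es => k; have [? /(_ 0%N) /cantor_level01] := digits k.
Qed.

End CantorLimit.
Arguments cantor_set_digits {R N Di} N_gt1 {x}.

Definition count_below {N : nat} (D : {set 'I_N}) (e : 'I_N) : nat :=
  #|[set d in D | (d < e)%N]|.

Section CountBelow.
Context {N : nat} (D : {set 'I_N}).

Lemma count_below_lt {e e' : 'I_N} : e \in D -> (e < e')%N ->
  (count_below D e < count_below D e')%N.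
Proof.
move=> eD lt_ee'; apply/proper_card/properP; split.
  by apply/fintype.subsetP => d; rewrite !inE => /andP[-> /ltn_trans ->].
by exists e; rewrite !inE ?eD ?ltnn.
Qed.

Lemma count_below_inj : {in D &, injective (count_below D)}.
Proof.
move=> e e' eD e'D eq_cnt; apply: val_inj; case: (ltngtP e e') => // lt.
  by have := count_below_lt eD lt; rewrite eq_cnt ltnn.
by have := count_below_lt e'D lt; rewrite eq_cnt ltnn.
Qed.

Lemma count_below_lt_card (e : 'I_N) : e \in D -> (count_below D e < #|D|)%N.
Proof.
move=> eD; apply/proper_card/properP; split.
  by apply/fintype.subsetP => d; rewrite inE => /andP[].
by exists e; rewrite // inE ltnn andbF.
Qed.

Lemma sum_lt_count_below (e : 'I_N) :
  (\sum_(d in D) (d < e) = count_below D e)%N.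
Proof.
rewrite /count_below -sum1_card [LHS]big_mkcond [RHS]big_mkcond /=.
by apply: eq_bigr => d _; rewrite inE; case: (d \in D); case: (d < e)%N.
Qed.

End CountBelow.

Definition cdf {R : realType} (mu : probability R R) (y : R) : R :=
  fine (mu `[0, y]%classic).

Section SelfSimilarCDF.
Context {R : realType} {N : nat} {D : {set 'I_N}} {mu : probability R R}.
Hypothesis N_gt1 : (1 < N)%N.
Hypothesis mu_ss : self_similar N D mu.
Hypothesis D_gt0 : (0 < #|D|)%N.

Lemma measureI_itv01 {A : set R} : measurable A -> mu A = mu (A `&` `[0, 1]%classic).
Proof.
move=> mA; rewrite (measureDI mu mA (measurable_itv `[0, 1])).
rewrite [X in (X + _)%E](_ : _ = 0%E) ?add0e //; apply/eqP; rewrite -measure_le0.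
rewrite -mu_ss.1; apply: le_measure; rewrite ?inE.
- exact: measurableD.
- exact: measurableC.
- by move=> z [].
Qed.

Lemma measure_itv01 : mu `[0, 1]%classic = 1%E.
Proof. by rewrite -(probability_setT mu) (measureI_itv01 measurableT) setTI. Qed.

Lemma cdfE y : mu `[0, y]%classic = (cdf mu y)%:E.
Proof.
rewrite /cdf fineK // ge0_fin_numE ?measure_ge0 //.
by rewrite (le_lt_trans (probability_le1 mu (measurable_itv _))) ?ltey.
Qed.

Lemma cdf01 y : 0 <= cdf mu y <= 1.
Proof.
by rewrite -!lee_fin -cdfE measure_ge0 probability_le1 //; exact: measurable_itv.
Qed.

(* The preimage is [[-d, t + e - d]]; on [[0, 1]], which carries [mu], it is
   everything if [d < e], nothing if [d > e] and [[0, t]] if [d = e]. *)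
Lemma measure_cphi_preimage (d e : 'I_N) (y : R) : 0 < shift e y < 1 ->
  mu (cphi N d @^-1` `[0, y]%classic) =
  (((d < e)%N)%:R + (d == e)%:R * cdf mu (shift e y))%:E.
Proof.
set t := shift e y => /andP[t0 t1].
rewrite cphi_preimage_itv // measureI_itv01; last exact: measurable_itv.
have -> : shift d y = t + (e : nat)%:R - (d : nat)%:R by rewrite /t /shift; ring.
have d0 := ler0n R d; have e0 := ler0n R e.
rewrite -val_eqE /=.
case: (ltngtP d e) => [lt_de|lt_ed|/val_inj de]; rewrite /= ?mulr1n ?mulr0n ?mul0r ?addr0.
- have le_de : (d : nat)%:R + 1 <= (e : nat)%:R :> R by rewrite natr1 ler_nat.
  rewrite -measure_itv01.
  congr (mu _); apply/seteqP; split=> z /=; first by case.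
  by rewrite !in_itv /= => /andP[z0 z1]; split; apply/andP; split; lra.
- have le_ed : (e : nat)%:R + 1 <= (d : nat)%:R :> R by rewrite natr1 ler_nat.
  rewrite [X in mu X](_ : _ = set0) ?measure0 //.
  apply/seteqP; split=> z //=.
  by rewrite !in_itv /= => -[/andP[? ?] /andP[? ?]]; lra.
- rewrite de mul1r add0r addrK -cdfE (measureI_itv01 (measurable_itv `[0, t])).
  congr (mu _); apply/seteqP; split=> z /=; rewrite !in_itv /=.
    by move=> [/andP[? ?] /andP[? ?]]; split; apply/andP; split; lra.
  by move=> [/andP[? ?] /andP[? ?]]; split; apply/andP; split; lra.
Qed.

Lemma cdf_self_similar (e : 'I_N) (y : R) : 0 < shift e y < 1 ->
  #|D|%:R * cdf mu y = (count_below D e)%:R + (e \in D)%:R * cdf mu (shift e y).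
Proof.
move=> t01; rewrite /cdf [in LHS](mu_ss.2 _ (measurable_itv _)).
under eq_bigr => d _ do rewrite (measure_cphi_preimage d _ _ t01).
rewrite sumEFin -EFinM /= mulrA mulfV ?mul1r ?pnatr_eq0 -?lt0n //.
rewrite big_split /= -natr_sum sum_lt_count_below -mulr_suml; congr (_ + _ * _).
have [eD|eND] := boolP (e \in D).
  by rewrite (bigD1 e) //= eqxx big1 ?addr0 // => d /andP[_ /negbTE ->].
by rewrite big1 // => d dD; case: eqP => // de; rewrite -de dD in eND.
Qed.

End SelfSimilarCDF.

Section PairCriterion.
Context {R : realType} {N : nat} {D : {set 'I_N}} {mu : probability R R}.
Hypothesis N_gt1 : (1 < N)%N.
Hypothesis mu_ss : self_similar N D mu.
Hypothesis D_gt0 : (0 < #|D|)%N.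

Lemma cdf_tail_rec {es : nat -> 'I_N} {x : R} :
  irrational x -> (forall k, 0 <= tail es x k <= 1) -> forall k,
  #|D|%:R * cdf mu (tail es x k) =
    (count_below D (es k))%:R + (es k \in D)%:R * cdf mu (tail es x k.+1).
Proof.
move=> x_irr tail01 k; apply: cdf_self_similar => //.
exact: irrational_lt01 (irrational_tail N_gt1 _ _ _ x_irr) (tail01 k.+1).
Qed.

Lemma subset_iff_irrational_cdf {P : {set 'I_N}} {x : R} :
  #|P| = 2 -> cantor_set N P x -> irrational x ->
  P \subset D <-> irrational (cdf mu x).
Proof.
move=> P2 Px x_irr.
have P_gt0 : (0 < #|P|)%N by rewrite P2.
have [es digits] := cantor_set_digits N_gt1 P_gt0 Px.
have esP k := (digits k).1; have tail01 k := (digits k).2.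
have rec := cdf_tail_rec x_irr tail01.
split=> [sPD cdf_rat | cdf_irr].
  apply/x_irr/(rational_of_eventually_periodic N_gt1 _ _ tail01).
  apply: (eventually_periodic_inj (count_below_inj D)) => [k|].
    exact: (fintype.subsetP sPD).
  apply: (eventually_periodic_of_rational rec) => // k.
  - exact: (fintype.subsetP sPD).
  - exact/count_below_lt_card/(fintype.subsetP sPD).
  - exact: cdf01.
apply: contrapT => nsPD; case: (pselect (forall k, es k \in D)) => [esD|].
  (* the digits then lie in the singleton [P :&: D] *)
  apply/x_irr/(rational_of_eventually_periodic N_gt1 _ _ tail01).
  have : (#|P :&: D| < #|P|)%N by apply/proper_card/properIl/negP.
  rewrite P2 ltnS => /card_le1_eqP es_eq; exists 0%N, 1%N; split=> // l.
  by apply: es_eq; rewrite inE ?esP ?esD.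
move=> /existsNP [k /negP esND].
exact/cdf_irr/(rational_of_rec_stop D_gt0 rec k esND).
Qed.

End PairCriterion.

Lemma bigcup_card2_subset {T : finType} {D : {set T}} : (2 <= #|D|)%N ->
  D = \bigcup_(P : {set T} | (#|P| == 2)%N && (P \subset D)) P.
Proof.
move=> D_ge2; apply/setP => i; apply/idP/bigcupP; last first.
  by move=> [P /andP[_ sPD] /(fintype.subsetP sPD)].
move=> iD.
have /card_gt0P [j] : (0 < #|D :\ i|)%N by rewrite (cardsD1 i) iD in D_ge2.
rewrite !inE => /andP[ji jD]; exists [set i; j]%SET; last by rewrite !inE eqxx.
rewrite cards2 (eq_sym i) ji /=.
by apply/fintype.subsetP => z; rewrite !inE => /orP[] /eqP ->.
Qed.

Theorem lemma2p13 (R : realType) (N : nat) (D : {set 'I_N})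
  (mu : probability R R) (x : {set 'I_N} -> R) :
  (3 <= N)%N -> (2 <= #|D| <= N.-1)%N ->
  self_similar N D mu ->
  (forall Di : {set 'I_N}, #|Di| = 2%N ->
     cantor_set N Di (x Di) /\ irrational (x Di)) ->
  D = \bigcup_(Di : {set 'I_N} | (#|Di| == 2%N) &&
                 `[< irrational (fine (mu `[0, x Di]%classic)) >]) Di.
Proof.
move=> N_ge3 /andP[D_ge2 _] mu_ss x_spec.
rewrite {1}(bigcup_card2_subset D_ge2); apply: eq_bigl => P.
case: (boolP (#|P| == 2)) => //= /eqP P2; have [Px x_irr] := x_spec P P2.
have := subset_iff_irrational_cdf (ltnW N_ge3) mu_ss (ltnW D_ge2) P2 Px x_irr.
by move=> [? ?]; apply/idP/asboolP.
Qed.
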